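(* For every signed subcubic graph $\Sigma$, $l_0(\Sigma) = l(\Sigma)$.
   Context: A signed graph $\Sigma = (G,\sigma)$ consists of a finite graph $G$ (loops and multiple edges allowed) and a sign function $\sigma: E(G) \to \{+1,-1\}$. A circle is a connected nonempty $2$-regular subgraph (a loop is a circle of length $1$, a pair of parallel edges forms a circle of length $2$); a circle is positive if the product of the signs of its edges is $+1$ and negative otherwise. $\Sigma$ is balanced if all its circles are positive. The frustration index $l(\Sigma)$ is the smallest number of edges whose deletion from $\Sigma$ leaves a balanced signed graph. The frustration number $l_0(\Sigma)$ is the smallest number of vertices whose deletion (together with all incident edges) from $\Sigma$ leaves a balanced signed graph. $\Sigma$ is subcubic if every vertex of the underlying graph $G$ has degree at most $3$. *)

From mathcomp Require Import all_boot.
Set Implicit Arguments. Unset Strict Implicit. Unset Printing Implicit Defensive.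

(* A signed graph (loops and multiple edges allowed) is given by a finite
   vertex type V, a finite edge type E, an endpoint map ends : E -> V * V
   (a loop is an edge e with (ends e).1 = (ends e).2), and a sign map
   sgn : E -> bool, where sgn e = true means e is NEGATIVE. *)

Section SignedGraph.
Variables (V E : finType) (ends : E -> V * V) (sgn : E -> bool).

(* degree of v in the spanning subgraph with edge set S; loops count twice *)
Definition deg_in (S : {set E}) (v : V) : nat :=
  \sum_(e in S) (((ends e).1 == v) + ((ends e).2 == v)).

Definition verts_of (S : {set E}) : {set V} :=
  [set v | [exists e in S, ((ends e).1 == v) || ((ends e).2 == v)]].

Definition adj_in (S : {set E}) : rel V :=
  fun u v => [exists e in S, ((ends e == (u, v)) || (ends e == (v, u)))].

Definition circle (C : {set E}) : bool :=
  [&& C != set0,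
      [forall v in verts_of C, deg_in C v == 2] &
      [forall u in verts_of C, forall v in verts_of C, connect (adj_in C) u v]].

Definition positive_circle (C : {set E}) : bool :=
  ~~ odd #|[set e in C | sgn e]|.

(* the signed subgraph with edge set S (on any vertex set containing its
   endpoints) is balanced: every circle in it is positive *)
Definition balanced_edgesb (S : {set E}) : bool :=
  [forall C : {set E}, (circle C && (C \subset S)) ==> positive_circle C].

Definition edges_avoiding (X : {set V}) : {set E} :=
  [set e | ((ends e).1 \notin X) && ((ends e).2 \notin X)].

(* frustration index l: least number of edges whose deletion leaves a
   balanced signed graph (F = setT always qualifies) *)
Definition frustration_index : nat :=
  \big[minn/#|E|]_(F : {set E} | balanced_edgesb (~: F)) #|F|.

(* frustration number l_0: least number of vertices whose deletion leaves a
   balanced signed graph (X = setT always qualifies) *)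
Definition frustration_number : nat :=
  \big[minn/#|V|]_(X : {set V} | balanced_edgesb (edges_avoiding X)) #|X|.

Definition subcubic : bool := [forall v, deg_in setT v <= 3].

End SignedGraph.

From mathcomp Require Import all_boot zify.
Set Implicit Arguments. Unset Strict Implicit. Unset Printing Implicit Defensive.

(* By Harary's criterion a set of edges is balanced iff some switching
   [s : V -> bool] makes the sign of each of its edges the sum mod 2 of the values of
   [s] at the endpoints.  Deleting one endpoint of every edge of a balancing
   edge set gives [l0 <= l].  Conversely, if deleting [X] balances the graph,
   extend the corresponding switching over [X] so as to minimise the number of
   frustrated edges.  Every frustrated edge meets [X]; and since switching a
   vertex of [X] does not help and its degree is at most 3, each vertex of [X]
   meets at most one frustrated edge.  Hence [l <= l0]. *)

Lemma bigmin_le (I : eqType) (r : seq I) (P : pred I) (F : I -> nat) (d : nat) (i : I) :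
  i \in r -> P i -> \big[minn/d]_(j <- r | P j) F j <= F i.
Proof.
elim: r => [//|j r IH]; rewrite inE big_cons => /predU1P[<- ->|ir Pi].
  exact: geq_minl.
by case: (P j); rewrite ?geq_min IH ?orbT.
Qed.

Lemma bigmin_attained (I : finType) (P : pred I) (F : I -> nat) (d : nat) (i0 : I) :
  P i0 -> F i0 <= d -> exists2 i, P i & \big[minn/d]_(j | P j) F j = F i.
Proof.
move=> Pi0 Fi0; case: (arg_minnP F Pi0) => i Pi iF; exists i => //.
apply/eqP; rewrite eqn_leq bigmin_le ?mem_index_enum //=.
apply: (big_ind (leq (F i))) => [|m n|j /iF //]; first exact: leq_trans (iF _ Pi0) Fi0.
by rewrite leq_min => ->.
Qed.

Lemma leq_card_incidence (I J : finType) (R : I -> J -> bool) (A : {set I}) (X : {set J}) :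
  (forall i, i \in A -> exists2 j, j \in X & R i j) ->
  (forall j, j \in X -> #|[set i in A | R i j]| <= 1) -> #|A| <= #|X|.
Proof.
move=> cover sparse; rewrite -!sum1_card.
apply: (@leq_trans (\sum_(i in A) \sum_(j in X) (R i j : nat))).
  by apply: leq_sum => i /cover [j jX Rij]; rewrite (bigD1 j) //= Rij.
rewrite exchange_big; apply: leq_sum => j jX; apply: leq_trans (sparse j jX).
rewrite -sum1_card [leqRHS]big_mkcond [leqLHS]big_mkcond /=; apply: leq_sum => i _.
by rewrite inE; case: (i \in A); case: (R i j).
Qed.

Section Switching.
Variables (V E : finType) (ends : E -> V * V) (sgn : E -> bool).

Local Notation deg := (deg_in ends).
Local Notation balanced := (balanced_edgesb ends sgn).

Definition mult (e : E) (v : V) : nat := ((ends e).1 == v) + ((ends e).2 == v).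

Definition negatives (A : {set E}) : nat := #|[set e in A | sgn e]|.

Definition cut_signed (s : V -> bool) (S : {set E}) : Prop :=
  {in S, forall e, sgn e = s (ends e).1 (+) s (ends e).2}.

Lemma negativesE (A : {set E}) : negatives A = \sum_(e in A) sgn e.
Proof.
rewrite /negatives -sum1_card [LHS]big_mkcond [RHS]big_mkcond /=.
by apply: eq_bigr => e _; rewrite inE; case: (e \in A); case: (sgn e).
Qed.

Lemma negatives_setU1 (e : E) (A : {set E}) :
  e \notin A -> negatives (e |: A) = sgn e + negatives A.
Proof. by move=> eA; rewrite !negativesE big_setU1. Qed.

Lemma deg_setU1 (e : E) (A : {set E}) (w : V) :
  e \notin A -> deg (e |: A) w = mult e w + deg A w.
Proof. by move=> eA; rewrite /deg_in big_setU1. Qed.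

Lemma leq_mult_deg (e : E) (A : {set E}) (w : V) : e \in A -> mult e w <= deg A w.
Proof. by move=> eA; rewrite /deg_in (bigD1 e) //= leq_addr. Qed.

Lemma verts_of_deg (A : {set E}) (w : V) : (w \in verts_of ends A) = (0 < deg A w).
Proof.
rewrite inE lt0n /deg_in sum_nat_eq0 negb_forall.
apply/existsP/existsP => [[e /andP[eA h]]|[e h]]; exists e.
  by rewrite eA /=; move: h; rewrite !(eq_sym _ w); do 2 case: (_ == _).
move: h; rewrite negb_imply => /andP[-> /=].
by case: ((ends e).1 == w); case: ((ends e).2 == w).
Qed.

Lemma adj_in_sym (S : {set E}) : symmetric (adj_in ends S).
Proof. by move=> u v; apply/existsP/existsP => -[e /andP[eS h]]; exists e; rewrite eS orbC. Qed.

Lemma connect_adj_in_sub (S T : {set E}) (u v : V) :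
  S \subset T -> connect (adj_in ends S) u v -> connect (adj_in ends T) u v.
Proof.
move=> ST; apply: connect_sub => x y /existsP[e /andP[eS h]].
by apply/connect1/existsP; exists e; rewrite (subsetP ST _ eS).
Qed.

Lemma balanced_sub (S T : {set E}) : balanced T -> S \subset T -> balanced S.
Proof.
move=> /forallP bT ST; apply/forallP => C; apply/implyP => /andP[cC CS].
by have /implyP := bT C; apply; rewrite cC (subset_trans CS ST).
Qed.

Lemma circle_deg (C : {set E}) (v : V) :
  circle ends C -> deg C v = 2 * (v \in verts_of ends C).
Proof.
case/and3P => _ /forallP degC _; case vC: (v \in verts_of ends C).
  by move/implyP/(_ vC)/eqP: (degC v).
by move: vC; rewrite verts_of_deg; case: (deg C v).
Qed.

Lemma sum_mult (s : V -> bool) (e : E) :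
  \sum_v s v * mult e v = s (ends e).1 + s (ends e).2.
Proof.
have pick a : \sum_v s v * (a == v) = s a.
  rewrite (bigD1 a) //= eqxx muln1 big1 ?addn0 // => v /negbTE va.
  by rewrite eq_sym va muln0.
by rewrite /mult; under eq_bigr do rewrite mulnDr; rewrite big_split /= !pick.
Qed.

(* Each edge contributes [s u + s v], which has the parity of its sign. *)
Lemma odd_negatives (s : V -> bool) (A : {set E}) :
  cut_signed s A -> odd (negatives A) = odd (\sum_v s v * deg A v).
Proof.
move=> sA.
have -> : \sum_v s v * deg A v
          = negatives A + 2 * \sum_(e in A) (s (ends e).1 && s (ends e).2).
  under eq_bigr do rewrite /deg_in big_distrr.
  rewrite exchange_big negativesE big_distrr -big_split /=.
  apply: eq_bigr => e eA; rewrite sum_mult sA //.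
  by case: (s _); case: (s _).
by rewrite oddD oddM addbF.
Qed.

Lemma cut_signed_balanced (s : V -> bool) (S : {set E}) : cut_signed s S -> balanced S.
Proof.
move=> sS; apply/forallP => C; apply/implyP => /andP[cC CS].
rewrite /positive_circle -/(negatives C) (odd_negatives (sub_in1 (subsetP CS) sS)).
under eq_bigr do rewrite circle_deg // mulnCA.
by rewrite -big_distrr oddM.
Qed.

(* Closing the path by one more edge gives degree 2 at each of its vertices. *)
Lemma path_edge_set (S : {set E}) (x : V) (p : seq V) :
  uniq (x :: p) -> path (adj_in ends S) x p ->
  exists2 P : {set E}, P \subset S &
    (forall w, deg P w + (w == x) + (w == last x p) = 2 * (w \in x :: p)) /\
    (forall w, w \in x :: p -> connect (adj_in ends P) x w).
Proof.
elim: p x => [|y p IH] x.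
  move=> _ _; exists set0; first exact: sub0set.
  split=> [w|w]; last by rewrite mem_seq1 => /eqP ->.
  by rewrite /deg_in big_set0 mem_seq1; case: (w == x).
rewrite /= => /andP[xyp uyp] /andP[/existsP[f /andP[fS xfy]] pyp].
have [P PS [degP connP]] := IH y uyp pyp.
have mult_f w : mult f w = (w == x) + (w == y).
  by rewrite /mult; case/orP: xfy => /eqP -> /=; rewrite !(eq_sym w) // addnC.
have degPx : deg P x = 0.
  by move: (degP x); rewrite (negbTE xyp) muln0; case: (deg P x).
have fP : f \notin P.
  by apply: contraT; rewrite negbK => /(leq_mult_deg x); rewrite degPx mult_f eqxx.
have xy : x != y by apply: contraNneq xyp => ->; rewrite mem_head.
exists (f |: P); first by rewrite subUset sub1set fS PS.
split=> [w|w].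
  rewrite deg_setU1 // mult_f; case: (eqVneq w x) => [->|wx].
    have /negbTE -> : x != last y p by apply: contraNneq xyp => ->; apply: mem_last.
    by rewrite degPx (negbTE xy) mem_head.
  by rewrite inE (negbTE wx) /= -degP; lia.
rewrite inE => /predU1P[->|wyp]; first exact: connect0.
apply: (@connect_trans _ _ y).
  apply/connect1/existsP; exists f; rewrite setU11 /=.
  by case/orP: xfy => /eqP ->; rewrite eqxx ?orbT.
exact: connect_adj_in_sub (subsetUr _ _) (connP w wyp).
Qed.

Lemma cut_signed_setU1_disconnected (s : V -> bool) (S : {set E}) (e : E) :
  cut_signed s S -> ~~ connect (adj_in ends S) (ends e).1 (ends e).2 ->
  exists t, cut_signed t (e |: S).
Proof.
move=> sS disc; have symS := sym_connect_sym (@adj_in_sym S).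
pose c := connect (adj_in ends S) (ends e).2.
exists (fun w => s w (+) c w && (sgn e (+) s (ends e).1 (+) s (ends e).2)).
move=> f; rewrite in_setU1 => /predU1P[->|fS].
  rewrite /c connect0 symS (negbTE disc).
  by case: (sgn e); case: (s _); case: (s _).
have /same_connect_r cf : connect (adj_in ends S) (ends f).1 (ends f).2.
  by apply/connect1/existsP; exists f; rewrite fS -surjective_pairing eqxx.
rewrite /c -(cf symS) sS //.
by rewrite addbACA addbb addbF.
Qed.

Lemma negative_circle_of_path (s : V -> bool) (S : {set E}) (e : E) :
  cut_signed s S -> e \notin S -> sgn e != s (ends e).1 (+) s (ends e).2 ->
  connect (adj_in ends S) (ends e).1 (ends e).2 ->
  exists2 C : {set E}, C \subset e |: S & circle ends C && ~~ positive_circle sgn C.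
Proof.
move=> sS eS sgn_e /connectP[p0 /shortenP[p pp up _] last_p].
have [P PS [degP connP]] := path_edge_set up pp.
have eP : e \notin P by apply: contra eS; apply: (subsetP PS).
have degC w : deg (e |: P) w = 2 * (w \in (ends e).1 :: p).
  by rewrite deg_setU1 // -degP -last_p /mult !(eq_sym _ w); lia.
exists (e |: P); first exact: setUS.
apply/andP; split.
  apply/and3P; split.
  - by apply/set0Pn; exists e; apply: setU11.
  - by apply/forallP => w; apply/implyP; rewrite verts_of_deg degC; case: (_ \in _).
  - have symC := sym_connect_sym (@adj_in_sym (e |: P)).
    have connC w : w \in verts_of ends (e |: P) -> connect (adj_in ends (e |: P)) (ends e).1 w.
      rewrite verts_of_deg degC => pw.
      by apply: connect_adj_in_sub (subsetUr _ _) (connP w _); move: pw; case: (_ \in _).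
    apply/forallP => u; apply/implyP => /connC eu; apply/forallP => v; apply/implyP => /connC ev.
    by apply: connect_trans ev; rewrite symC.
have evenC : ~~ odd (\sum_v s v * deg (e |: P) v).
  under eq_bigr do rewrite degC mulnCA.
  by rewrite -big_distrr oddM.
have sumP : odd (\sum_v s v * deg P v) = s (ends e).1 (+) s (ends e).2.
  move: evenC; under eq_bigr do rewrite deg_setU1 // mulnDr.
  rewrite big_split /= sum_mult !oddD !oddb.
  by case: (odd _); case: (s _); case: (s _).
rewrite /positive_circle -/(negatives _) negatives_setU1 // oddD.
rewrite (odd_negatives (sub_in1 (subsetP PS) sS)) sumP oddb.
by move: sgn_e; case: (sgn e); case: (s _); case: (s _).
Qed.

Lemma balanced_cut_signed (S : {set E}) : balanced S -> exists s, cut_signed s S.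
Proof.
have [n] := ubnP #|S|; elim: n S => // n IH S ltSn bS.
have [->|[e eS]] := set_0Vmem S; first by exists (fun=> false) => e; rewrite inE.
have ltS'n : #|S :\ e| < n by rewrite (cardsD1 e S) eS in ltSn.
have [s sS'] := IH _ ltS'n (balanced_sub bS (subsetDl S [set e])).
have eS' : e \notin S :\ e by rewrite setD11.
rewrite -(setD1K eS) in bS *.
case: (eqVneq (sgn e) (s (ends e).1 (+) s (ends e).2)) => [sgn_e|sgn_e].
  by exists s => f; rewrite in_setU1 => /predU1P[->|/sS'].
have [conn|disc] := boolP (connect (adj_in ends (S :\ e)) (ends e).1 (ends e).2).
  have [C CS /andP[cC negC]] := negative_circle_of_path sS' eS' sgn_e conn.
  by move/forallP/(_ C)/implyP: bS; rewrite cC CS (negbTE negC) => /(_ isT).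
exact: cut_signed_setU1_disconnected sS' disc.
Qed.

Lemma balancedP (S : {set E}) : reflect (exists s, cut_signed s S) (balanced S).
Proof.
by apply: (iffP idP) => [/balanced_cut_signed|[s /cut_signed_balanced]].
Qed.

Definition switch (t : V -> bool) (x : V) (w : V) : bool := t w (+) (w == x).

Definition frustrated (t : V -> bool) : {set E} :=
  [set e | sgn e != t (ends e).1 (+) t (ends e).2].

Lemma cut_signed_setC_frustrated (t : V -> bool) : cut_signed t (~: frustrated t).
Proof. by move=> e; rewrite !inE negbK => /eqP. Qed.

Lemma in_frustrated_switch (t : V -> bool) (x : V) (e : E) :
  (e \in frustrated (switch t x)) = (e \in frustrated t) (+) odd (mult e x).
Proof.
rewrite !inE /switch /mult oddD !oddb.
by case: (sgn e); case: (t _); case: (t _); case: (_ == x); case: (_ == x).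
Qed.

(* Switching at [x] flips exactly the non-loop edges at [x]; a loop uses up two
   units of the degree bound. *)
Lemma card_frustrated_at (t : V -> bool) (x : V) :
  deg setT x <= 3 -> #|frustrated t| <= #|frustrated (switch t x)| ->
  #|[set e in frustrated t | 0 < mult e x]| <= 1.
Proof.
move=> deg_x.
have card_sum (A : {set E}) : #|A| = \sum_e (e \in A : nat).
  by rewrite -sum1_card big_mkcond; apply: eq_bigr => e _; case: (e \in A).
pose b e := e \in frustrated t; pose o e := odd (mult e x).
pose lp e := ((ends e).1 == x) && ((ends e).2 == x).
rewrite !card_sum; under [X in _ <= X -> _]eq_bigr do rewrite in_frustrated_switch.
move=> le_switch0.
have le_switch : \sum_e (b e : nat) <= \sum_e (b e (+) o e : nat) := le_switch0.
have symdiff : \sum_e (b e (+) o e : nat) + 2 * \sum_e (b e && o e : nat)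
               = \sum_e (b e : nat) + \sum_e (o e : nat).
  rewrite big_distrr -!big_split /=; apply: eq_bigr => e _.
  by case: (b e); case: (o e).
have degx : \sum_e (o e : nat) + 2 * \sum_e (lp e : nat) <= 3.
  apply: leq_trans deg_x; rewrite /deg_in big_distrr -big_split /=.
  rewrite [leqRHS]big_mkcond; apply: eq_leq; apply: eq_bigr => e _.
  by rewrite inE /o /lp /mult; case: (_ == x); case: (_ == x).
have at_x : \sum_e (e \in [set e in frustrated t | 0 < mult e x] : nat)
            <= \sum_e (b e && o e : nat) + \sum_e (lp e : nat).
  rewrite -big_split /=; apply: leq_sum => e _.
  by rewrite inE /b /o /lp /mult; case: (_ \in _); case: (_ == x); case: (_ == x).
lia.
Qed.

Lemma edge_to_vertex_deletion (F : {set E}) :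
  balanced (~: F) ->
  exists2 X : {set V}, #|X| <= #|F| & balanced (edges_avoiding ends X).
Proof.
move=> bF; exists [set (ends e).1 | e in F]; first exact: leq_imset_card.
apply: balanced_sub bF _; apply/subsetP => e; rewrite !inE => /andP[e1 _].
by apply: contra e1 => eF; apply/imsetP; exists e.
Qed.

Lemma vertex_to_edge_deletion (X : {set V}) :
  subcubic ends -> balanced (edges_avoiding ends X) ->
  exists2 F : {set E}, #|F| <= #|X| & balanced (~: F).
Proof.
move=> /forallP subcub /balancedP[s0 s0X].
pose agrees (t : {ffun V -> bool}) := [forall w, (w \notin X) ==> (t w == s0 w)].
have agrees_s0 : agrees [ffun w => s0 w].
  by apply/forallP => w; rewrite ffunE eqxx implybT.
case: (arg_minnP (fun t : {ffun V -> bool} => #|frustrated t|) agrees_s0).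
move=> t /forallP t_s0 t_min.
have t_out w : w \notin X -> t w = s0 w by move=> wX; apply/eqP/(implyP (t_s0 w)).
exists (frustrated t); last first.
  by apply/balancedP; exists t; apply: cut_signed_setC_frustrated.
apply: (@leq_card_incidence _ _ (fun e x => 0 < mult e x)) => [e|x xX].
  rewrite inE => frust_e.
  have [e1X|e1X] := boolP ((ends e).1 \in X).
    by exists (ends e).1; rewrite // /mult eqxx.
  have [e2X|e2X] := boolP ((ends e).2 \in X).
    by exists (ends e).2; rewrite // /mult eqxx addn1.
  have /s0X : e \in edges_avoiding ends X by rewrite inE e1X e2X.
  by rewrite -!t_out // => sgn_e; move: frust_e; rewrite sgn_e eqxx.
apply: card_frustrated_at (subcub x) _.
have -> : frustrated (switch t x) = frustrated [ffun w => switch t x w].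
  by apply/setP => e; rewrite !inE !ffunE.
apply: t_min; apply/forallP => w; apply/implyP => wX.
have /negbTE wx : w != x by apply: contraNneq wX => ->.
by rewrite ffunE /switch t_out // wx addbF.
Qed.

End Switching.

Theorem theorem1 (V E : finType) (ends : E -> V * V) (sgn : E -> bool) :
  subcubic ends ->
  frustration_number ends sgn = frustration_index ends sgn.
Proof.
move=> subcub.
have balanced0 : balanced_edgesb ends sgn set0.
  by apply/balancedP; exists (fun=> false) => e; rewrite inE.
apply/eqP; rewrite eqn_leq; apply/andP; split.
- have [F bF ->] : exists2 F : {set E},
      balanced_edgesb ends sgn (~: F) & frustration_index ends sgn = #|F|.
    by apply: (bigmin_attained (i0 := setT)); rewrite ?setCT ?cardsT.
  have [X leXF bX] := edge_to_vertex_deletion bF.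
  by apply: leq_trans leXF; apply: bigmin_le (mem_index_enum X) bX.
- have [X bX ->] : exists2 X : {set V},
      balanced_edgesb ends sgn (edges_avoiding ends X) & frustration_number ends sgn = #|X|.
    apply: (bigmin_attained (i0 := setT)); rewrite ?cardsT //.
    by rewrite (_ : edges_avoiding _ _ = set0) //; apply/setP => e; rewrite !inE.
  have [F leFX bF] := vertex_to_edge_deletion subcub bX.
  by apply: leq_trans leFX; apply: bigmin_le (mem_index_enum F) bF.
Qed.
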